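(* Let $R,\mu$ be positive integers with $\mu<R$, $D=\gcd(R,\mu)$, and assume (as holds in each case below) that $D\ge2$ is prime and that under $G_{R,\mu}$ the ring $\mathbb Z_R$ has exactly two orbits $\{\lambda:\lambda\equiv0\pmod D\}$ and its complement. Then (with $t$ an integer): (i) If $R=3t\ge6$, $\mu=3$ ($D=3$): $\mathrm P^+_{R,3}(0)=\frac13\left(\binom{R-1}{2}-1\right)+1$, $\mathrm P^+_{R,3}(1)=\frac13\left(\binom{R-1}{2}-1\right)$. (ii) If $R=4t+2\ge6$, $\mu=4$ ($D=2$): $\mathrm P^+_{R,4}(0)=\frac14\left(\binom{R-1}{3}+\frac{R-2}{2}\right)$, $\mathrm P^+_{R,4}(1)=\frac14\left(\binom{R-1}{3}-\frac{R-2}{2}\right)$. (iii) If $R=5t\ge10$, $\mu=5$ ($D=5$): $\mathrm P^+_{R,5}(0)=\frac15\left(\binom{R-1}{4}-1\right)+1$, $\mathrm P^+_{R,5}(1)=\frac15\left(\binom{R-1}{4}-1\right)$. (iv) If $\mu=6$ and either $R\equiv2\pmod6$, $R\ge8$, or $R\equiv4\pmod6$, $R\ge10$ ($D=2$): $\mathrm P^+_{R,6}(0)=\frac16\left(\binom{R-1}{5}-\binom{R/2-1}{2}\right)$, $\mathrm P^+_{R,6}(1)=\frac16\left(\binom{R-1}{5}+\binom{R/2-1}{2}\right)$. (v) If $R=6t+3\ge9$, $\mu=6$ ($D=3$): $\mathrm P^+_{R,6}(0)=\frac13\left(\frac12\binom{R-1}{5}+\frac{R-3}{3}\right)$, $\mathrm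 P^+_{R,6}(1)=\frac16\left(\binom{R-1}{5}-\frac{R-3}{3}\right)$. (vi) If $R=7t\ge14$, $\mu=7$ ($D=7$): $\mathrm P^+_{R,7}(0)=\frac17\left(\binom{R-1}{6}-1\right)+1$, $\mathrm P^+_{R,7}(1)=\frac17\left(\binom{R-1}{6}-1\right)$. (vii) If $R=4t+6\ge10$, $\mu=8$ ($D=2$): $\mathrm P^+_{R,8}(0)=\frac18\left(\binom{R-1}{7}+\binom{R/2-1}{3}\right)$, $\mathrm P^+_{R,8}(1)=\frac18\left(\binom{R-1}{7}-\binom{R/2-1}{3}\right)$. (viii) If $\mu=9$ and either $R=9t+3\ge12$ or $R=9t+6\ge15$ ($D=3$): $\mathrm P^+_{R,9}(0)=\frac19\left(\binom{R-1}{8}+2\binom{R/3-1}{2}\right)$, $\mathrm P^+_{R,9}(1)=\frac19\left(\binom{R-1}{8}-\binom{R/3-1}{2}\right)$. Moreover, in every case $\mathrm P^+_{R,\mu}(\lambda)=\mathrm P^+_{R,\mu}(0)$ when $\lambda\equiv0\pmod D$ and $\mathrm P^+_{R,\mu}(\lambda)=\mathrm P^+_{R,\mu}(1)$ otherwise.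
   Context: $\mathbb Z_R$ is the ring of integers modulo $R$ and $\mathbb Z_R^*$ its units; $\mathrm P^+_{R,\mu}(\lambda)$ is the number of $\mu$-element subsets of $\mathbb Z_R$ (distinct elements) whose sum in $\mathbb Z_R$ is $\lambda$. $G_{R,\mu}$ is the group of maps $\lambda\mapsto\lambda\ell+u\mu$ on $\mathbb Z_R$ with $\ell\in\mathbb Z_R^*$, $u\in\{0,\dots,R-1\}$; orbits are the equivalence classes of ''$\lambda_2=\lambda_1\varphi$ for some $\varphi\in G_{R,\mu}$''. *)

From mathcomp Require Import all_boot all_order all_algebra.
Set Implicit Arguments. Unset Strict Implicit. Unset Printing Implicit Defensive.
Import Order.TTheory GRing.Theory Num.Theory.

Definition Pplus (R mu lam : nat) : nat :=
  #|[set A : {set 'I_R} | (#|A| == mu) &&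
       ((\sum_(i in A) (i : nat)) %% R == lam %% R)]|.

(* lam2 = lam1 phi for some phi in G_{R,mu}: phi(lam) = lam*l + u*mu with
   l in Z_R^* and u in {0,...,R-1}. *)
Definition G_rel (R mu : nat) (l1 l2 : 'I_R) : Prop :=
  exists l u : nat, [/\ l < R, coprime l R, u < R &
     (l2 : nat) = (l1 * l + u * mu) %% R].

Definition two_orbits (R mu : nat) : Prop :=
  forall l1 l2 : 'I_R,
    G_rel mu l1 l2 <-> ((gcdn R mu %| l1) = (gcdn R mu %| l2)).

(* Cut Z_R into R/D blocks of D consecutive residues. Inside the first block that a
   mu-subset meets in 0 < c < D points, rotate the subset; since D is prime, c is
   invertible modulo D, so a suitable rotation shifts the sum of the subset by any
   prescribed residue modulo D, injectively. Hence the mu-subsets that are not unions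
   of blocks are equidistributed among the residues of their sums modulo D, while the
   C(R/D, mu/D) unions of blocks all have sum (mu/D) C(D,2) modulo D. The two-orbit
   hypothesis makes P^+(lam) depend only on whether D divides lam, so each residue
   class modulo D collects R/D equal values; counting all C(R, mu) subsets then gives
   mu P^+(lam) = C(R-1, mu-1) + ([lam = r0 mod D] D - 1) C(R/D-1, mu/D-1)
   with r0 = (mu/D) C(D,2), which specializes to the eight cases. *)

From mathcomp Require Import all_boot all_order all_algebra.
From mathcomp Require Import cyclic zify ring lra.
Import Order.TTheory GRing.Theory Num.Theory.

Lemma card_le_in_inj (T T' : finType) (A : {set T}) (B : {set T'}) (f : T -> T') :
  {in A &, injective f} -> {in A, forall x, f x \in B} -> #|A| <= #|B|.
Proof.
move=> f_inj fAB; rewrite -(card_in_imset f_inj); apply/subset_leq_card/subsetP.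
by move=> _ /imsetP[x Ax ->]; apply: fAB.
Qed.

Lemma eqn_modMr_coprime l n x y : coprime l n ->
  (x * l == y * l %[mod n]) = (x == y %[mod n]).
Proof.
move=> co_ln; wlog le_yx : x y / y <= x.
  by move=> IH; case: (leqP y x) => [|/ltnW] /IH //; rewrite eq_sym [RHS]eq_sym.
by rewrite !eqn_mod_dvd ?leq_mul2r ?le_yx ?orbT // -mulnBl Gauss_dvdl // coprime_sym.
Qed.

Lemma Pplus_mod R mu lam : Pplus R mu (lam %% R) = Pplus R mu lam.
Proof. by rewrite /Pplus modn_mod. Qed.

Lemma Pplus_affine_le R mu lam l u : 0 < R -> coprime l R ->
  Pplus R mu lam <= Pplus R mu (lam * l + u * mu).
Proof.
move=> R_gt0 co_lR.
pose phi (x : 'I_R) : 'I_R := Ordinal (ltn_pmod (x * l + u) R_gt0).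
have phi_inj : injective phi.
  move=> x y /(congr1 val) /eqP; rewrite /= eqn_modDr eqn_modMr_coprime //.
  by rewrite !modn_small // => /eqP /val_inj.
apply: (@card_le_in_inj _ _ _ _ (fun A : {set 'I_R} => phi @: A)).
  by move=> A B _ _; apply: imset_inj.
move=> A; rewrite !inE => /andP[/eqP cardA /eqP sumA].
rewrite card_imset // cardA eqxx /=.
rewrite big_imset /=; last by move=> x y _ _; apply: phi_inj.
rewrite modn_summ big_split /= -big_distrl sum_nat_const cardA.
by rewrite -modnDml -modnMml sumA modnMml modnDml [u * _]mulnC.
Qed.

Lemma Pplus_G_rel R mu (l1 l2 : 'I_R) : G_rel mu l1 l2 -> Pplus R mu l1 <= Pplus R mu l2.
Proof.
case=> l [u [_ co_lR _ ->]]; rewrite Pplus_mod.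
by apply: Pplus_affine_le; first exact: leq_ltn_trans (ltn_ord l1).
Qed.

Lemma Pplus_two_orbits R mu (a b : 'I_R) : two_orbits R mu ->
  (gcdn R mu %| a) = (gcdn R mu %| b) -> Pplus R mu a = Pplus R mu b.
Proof.
move=> orbits ab; apply/eqP; rewrite eqn_leq.
by rewrite !Pplus_G_rel //; apply/orbits.
Qed.

Lemma Pplus_dvd_classes R mu (lam : 'I_R) :
  1 < R -> prime (gcdn R mu) -> two_orbits R mu ->
  (gcdn R mu %| lam -> Pplus R mu lam = Pplus R mu 0) /\
  (~~ (gcdn R mu %| lam) -> Pplus R mu lam = Pplus R mu 1).
Proof.
move=> R_gt1 D_prime orbits; have R_gt0 := ltnW R_gt1.
split=> [D_lam | D_Nlam].
  by apply: (Pplus_two_orbits _ _ lam (Ordinal R_gt0)); rewrite //= dvdn0.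
apply: (Pplus_two_orbits _ _ lam (Ordinal R_gt1)); rewrite //= dvdn1 (negbTE D_Nlam).
by apply/esym/negbTE; apply: contraTneq D_prime => ->.
Qed.

Section Blocks.

Variables (R D : nat).
Hypotheses (D_gt0 : 0 < D) (D_dvd_R : D %| R).
Local Notation s := (R %/ D).

Lemma block_lt (x : 'I_R) : x %/ D < s.
Proof. by rewrite ltn_divLR // divnK. Qed.

Definition block (x : 'I_R) : 'I_s := Ordinal (block_lt x).

Lemma block_elt_lt (q : 'I_s) t : q * D + t %% D < R.
Proof.
apply: (@leq_trans (q.+1 * D)); first by rewrite mulSnr ltn_add2l ltn_mod.
by rewrite -leq_divRL.
Qed.

Definition block_elt (q : 'I_s) t : 'I_R := Ordinal (block_elt_lt q t).

Lemma block_eltK q t : block (block_elt q t) = q.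
Proof. by apply: val_inj; rewrite /= divnMDl // (@divn_small (t %% D)) ?addn0 ?ltn_mod. Qed.

Lemma block_elt_mod q t : block_elt q t %% D = t %% D.
Proof. by rewrite /= modnMDl modn_mod. Qed.

Lemma sum_block (F : nat -> nat) q :
  \sum_(x : 'I_R | block x == q) F x = \sum_(t < D) F (q * D + t).
Proof.
pose offset (x : 'I_R) : 'I_D := Ordinal (ltn_pmod x D_gt0).
rewrite (reindex_onto (fun t : 'I_D => block_elt q t) offset) /=; last first.
  by move=> x /eqP <-; apply: val_inj; rewrite /= modn_mod -divn_eq.
rewrite (eq_bigl xpredT) => [|t]; first by apply: eq_bigr => t _; rewrite modn_small.
by rewrite block_eltK eqxx; apply/eqP/val_inj; rewrite /= modnMDl !modn_small.
Qed.

Lemma card_block q : #|[set x : 'I_R | block x == q]| = D.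
Proof. by rewrite -sum1dep_card (sum_block (fun=> 1)) sum_nat_const card_ord muln1. Qed.

Lemma card_residue r : r < D -> #|[set x : 'I_R | x %% D == r]| = s.
Proof.
move=> r_lt_D; rewrite -sum1dep_card (partition_big block predT) //=.
rewrite -[s in RHS]card_ord -sum1_card; apply: eq_bigr => q _.
rewrite big_mkcondl (sum_block (fun x => if x %% D == r then 1 else 0)) /=.
rewrite (bigD1 (Ordinal r_lt_D)) //= modnMDl modn_small // eqxx big1 // => t.
by rewrite -val_eqE /= modnMDl modn_small // => /negbTE ->.
Qed.

Definition block_count q (A : {set 'I_R}) := #|[set x in A | block x == q]|.

Lemma block_countE q A : block_count q A = \sum_(x in A) (block x == q).
Proof.
rewrite /block_count -sum1dep_card big_mkcondr /=.
by apply: eq_bigr => x _; case: (_ == _).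
Qed.

Lemma card_block_count (A : {set 'I_R}) : #|A| = \sum_(q : 'I_s) block_count q A.
Proof.
rewrite -sum1_card (partition_big block predT) //=.
by apply: eq_bigr => q _; rewrite sum1dep_card.
Qed.

Definition rot_block q k (x : 'I_R) : 'I_R :=
  if block x == q then block_elt q (x + k) else x.

Lemma block_rot q k x : block (rot_block q k x) = block x.
Proof. by rewrite /rot_block; case: eqP => [<-|//]; apply: block_eltK. Qed.

Lemma rot_block_mod q k x : rot_block q k x %% D = (x + k * (block x == q)) %% D.
Proof.
by rewrite /rot_block; case: eqP => _; rewrite ?block_elt_mod ?muln1 ?muln0 ?addn0.
Qed.

Lemma rot_block_inj q k : injective (rot_block q k).
Proof.
move=> x y e; have bxy : block x = block y by rewrite -(block_rot q k x) e block_rot.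
have /eqP : rot_block q k x %% D = rot_block q k y %% D by rewrite e.
rewrite !rot_block_mod bxy eqn_modDr => /eqP mxy.
apply: val_inj; rewrite /= (divn_eq x D) (divn_eq y D) mxy.
by move/(congr1 val): bxy => /= ->.
Qed.

Lemma block_count_rot p q k (A : {set 'I_R}) :
  block_count p (rot_block q k @: A) = block_count p A.
Proof.
rewrite !block_countE big_imset /=; last by move=> x y _ _; apply: rot_block_inj.
by apply: eq_bigr => x _; rewrite block_rot.
Qed.

Lemma sum_rot_block q k (A : {set 'I_R}) :
  \sum_(x in rot_block q k @: A) (x : nat) = \sum_(x in A) (x : nat) + k * block_count q A
    %[mod D].
Proof.
rewrite big_imset /=; last by move=> x y _ _; apply: rot_block_inj.
rewrite -modn_summ (eq_bigr (fun x : 'I_R => (x + k * (block x == q)) %% D)).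
  by rewrite modn_summ big_split /= block_countE big_distrr.
by move=> x _; rewrite rot_block_mod.
Qed.

Definition block_union (Q : {set 'I_s}) : {set 'I_R} := [set x | block x \in Q].

Definition blocks_met (A : {set 'I_R}) : {set 'I_s} := [set q | block_count q A != 0].

Definition partial_block (A : {set 'I_R}) := [pick q : 'I_s | 0 < block_count q A < D].

Lemma block_count_union p Q : block_count p (block_union Q) = (p \in Q) * D.
Proof.
rewrite /block_count; case: (boolP (p \in Q)) => pQ; rewrite ?mul1n ?mul0n.
  rewrite -[RHS](card_block p); apply: eq_card => x; rewrite !inE.
  by case: eqP => [->|]; rewrite ?pQ ?andbF.
apply: eq_card0 => x; rewrite !inE; apply/andP => -[xQ /eqP xp].
by rewrite -xp xQ in pQ.
Qed.

Lemma card_block_union Q : #|block_union Q| = #|Q| * D.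
Proof.
rewrite card_block_count (eq_bigr (fun p => (p \in Q) * D)) => [|p _]; last first.
  exact: block_count_union.
rewrite -big_distrl -sum1_card; congr (_ * D); rewrite [RHS]big_mkcond.
by apply: eq_bigr => p _; case: (p \in Q).
Qed.

Lemma blocks_met_union Q : blocks_met (block_union Q) = Q.
Proof.
apply/setP => p; rewrite inE block_count_union.
by case: (p \in Q); rewrite ?mul1n ?mul0n -?lt0n.
Qed.

Lemma partial_block_union Q : partial_block (block_union Q) = None.
Proof.
rewrite /partial_block; case: pickP => // p; rewrite block_count_union.
by case: (p \in Q); rewrite ?mul1n ?mul0n ?ltnn ?andbF.
Qed.

Lemma block_union_blocks_met A : partial_block A = None -> block_union (blocks_met A) = A.
Proof.
rewrite /partial_block; case: pickP => // no_partial _.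
apply/setP => x; rewrite !inE; apply/idP/idP => [met_x | xA]; last first.
  by rewrite -lt0n card_gt0; apply/set0Pn; exists x; rewrite !inE xA eqxx.
have := no_partial (block x); rewrite lt0n met_x /= => /negbT; rewrite -leqNgt => le_D.
have : [set y in A | block y == block x] == [set y | block y == block x].
  rewrite eqEcard card_block le_D andbT; apply/subsetP => y.
  by rewrite !inE => /andP[].
by move/eqP/setP/(_ x); rewrite !inE eqxx andbT => ->.
Qed.

Lemma sum_block_union Q :
  \sum_(x in block_union Q) (x : nat) = #|Q| * 'C(D, 2) %[mod D].
Proof.
rewrite (partition_big block (fun q => q \in Q)) => [|x]; last by rewrite inE.
rewrite (eq_bigr (fun q : 'I_s => q * D * D + 'C(D, 2))) => [|q qQ].
  by rewrite big_split -big_distrl /= modnMDl sum_nat_const.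
rewrite (eq_bigl (fun x => block x == q)) => [|x]; last first.
  by rewrite inE; case: eqP => [->|]; rewrite ?qQ ?andbF.
rewrite (sum_block id) big_split /= sum_nat_const card_ord mulnC.
by rewrite -(big_mkord xpredT (fun t => t)) bin2_sum.
Qed.

Lemma card_block_unions m :
  #|[set A : {set 'I_R} | (#|A| == m * D) && (partial_block A == None)]| = 'C(s, m).
Proof.
have -> : [set A : {set 'I_R} | (#|A| == m * D) && (partial_block A == None)] =
          block_union @: [set Q : {set 'I_s} | #|Q| == m].
  apply/setP => A; rewrite !inE; apply/andP/imsetP => [[/eqP cardA /eqP unionA] | [Q]].
    exists (blocks_met A); last by rewrite block_union_blocks_met.
    by rewrite inE -(eqn_pmul2r D_gt0) -card_block_union block_union_blocks_met ?cardA.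
  by rewrite inE => /eqP cardQ ->; rewrite card_block_union cardQ partial_block_union.
rewrite card_in_imset ?card_draws ?card_ord // => Q1 Q2 _ _ eQ.
by rewrite -(blocks_met_union Q1) eQ blocks_met_union.
Qed.

Definition Pmod mu r :=
  #|[set A : {set 'I_R} | (#|A| == mu) && ((\sum_(x in A) (x : nat)) %% D == r)]|.

Lemma sum_Pmod mu : \sum_(r < D) Pmod mu r = 'C(R, mu).
Proof.
rewrite -[R in 'C(R, _)]card_ord -card_draws -sum1dep_card.
pose sum_mod (A : {set 'I_R}) := Ordinal (ltn_pmod (\sum_(x in A) (x : nat)) D_gt0).
rewrite (partition_big sum_mod predT) //=.
by apply: eq_bigr => r _; rewrite sum1dep_card /Pmod; apply: eq_card => A; rewrite !inE.
Qed.

Lemma Pmod_Pplus mu r : 0 < R ->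
  Pmod mu r = \sum_(l : 'I_R | l %% D == r) Pplus R mu l.
Proof.
move=> R_gt0; rewrite /Pmod -sum1dep_card.
pose sum_mod (A : {set 'I_R}) := Ordinal (ltn_pmod (\sum_(x in A) (x : nat)) R_gt0).
rewrite (partition_big sum_mod (fun l : 'I_R => l %% D == r)) => [|A]; last first.
  by case/andP=> _ /eqP <-; rewrite /= modn_dvdm.
apply: eq_bigr => l /eqP lr; rewrite /Pplus -sum1dep_card; apply: eq_bigl => A.
rewrite -val_eqE /= (modn_small (ltn_ord l)).
case: (#|A| == mu) => //=; case: eqP => // sum_ne; apply/esym/negbTE/eqP => sumR.
by apply: sum_ne; rewrite -lr -sumR modn_dvdm.
Qed.

Definition scattered_sets mu r := [set A : {set 'I_R} |
  [&& #|A| == mu, (\sum_(x in A) (x : nat)) %% D == r & partial_block A != None]].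

Lemma sum_block_union_mod m (A : {set 'I_R}) :
  partial_block A = None -> #|A| = m * D ->
  (\sum_(x in A) (x : nat)) %% D = (m * 'C(D, 2)) %% D.
Proof.
move=> /block_union_blocks_met unionA cardA.
have /eqP : #|blocks_met A| * D = m * D by rewrite -card_block_union unionA.
by rewrite eqn_pmul2r // => /eqP <-; rewrite -[in LHS]unionA sum_block_union.
Qed.

Lemma Pmod_split m r :
  Pmod (m * D) r = #|scattered_sets (m * D) r| + (r == (m * 'C(D, 2)) %% D) * 'C(s, m).
Proof.
rewrite /Pmod -(cardsID [set A | partial_block A != None]); congr (_ + _).
  by apply: eq_card => A; rewrite !inE andbA.
rewrite -card_block_unions; case: eqP => [-> | r_ne]; rewrite ?mul1n ?mul0n.
  apply: eq_card => A; rewrite !inE negbK.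
  case: eqP => [unionA | _]; rewrite ?andbF ?andbT //.
  by case: eqP => //= cardA; rewrite (sum_block_union_mod m) ?eqxx.
apply: eq_card0 => A; rewrite !inE negbK; apply/and3P => -[/eqP unionA /eqP cardA /eqP sumA].
by apply: r_ne; rewrite -sumA (sum_block_union_mod m).
Qed.

Section PrimeBlockSize.

Hypothesis D_prime : prime D.

(* Rotating the first partial block, met in c points, by k shifts the sum by k * c;
   k := d * c ^ (totient D).-1 makes this shift d modulo D, by Euler's theorem. *)
Definition shift_sum d (A : {set 'I_R}) :=
  if partial_block A is Some q
  then rot_block q (d * block_count q A ^ (totient D).-1) @: A else A.

Lemma block_count_shift_sum d p A : block_count p (shift_sum d A) = block_count p A.
Proof. by rewrite /shift_sum; case: partial_block => // q; rewrite block_count_rot. Qed.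

Lemma partial_block_shift_sum d A : partial_block (shift_sum d A) = partial_block A.
Proof. by apply: eq_pick => q; rewrite block_count_shift_sum. Qed.

Lemma card_shift_sum d A : #|shift_sum d A| = #|A|.
Proof.
by rewrite /shift_sum; case: partial_block => // q; rewrite card_imset //; apply: rot_block_inj.
Qed.

Lemma sum_shift_sum d A : partial_block A != None ->
  \sum_(x in shift_sum d A) (x : nat) = \sum_(x in A) (x : nat) + d %[mod D].
Proof.
rewrite /shift_sum /partial_block; case: pickP => // q /andP[c_gt0 c_lt_D] _.
have co_cD : coprime (block_count q A) D by rewrite coprime_sym prime_coprime // gtnNdvd.
rewrite sum_rot_block -mulnA -expnSr prednK ?totient_gt0 //.
by rewrite -modnDmr -modnMmr Euler_exp_totient // modnMmr muln1 modnDmr.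
Qed.

Lemma shift_sum_inj d :
  {in [pred A | partial_block A != None] &, injective (shift_sum d)}.
Proof.
move=> A B; rewrite !inE => pA _ eAB.
have ePAB : partial_block A = partial_block B.
  by rewrite -(partial_block_shift_sum d A) eAB partial_block_shift_sum.
have eC q : block_count q A = block_count q B.
  by rewrite -(block_count_shift_sum d q A) eAB block_count_shift_sum.
move: eAB; rewrite /shift_sum -ePAB; case: (partial_block A) pA => // q _.
by rewrite eC; apply/imset_inj/rot_block_inj.
Qed.

Lemma card_scattered_le mu r r' : r < D -> r' < D ->
  #|scattered_sets mu r| <= #|scattered_sets mu r'|.
Proof.
move=> r_lt_D r'_lt_D; apply: (@card_le_in_inj _ _ _ _ (shift_sum (r' + D - r))).
  by move=> A B; rewrite !inE => /and3P[_ _ pA] /and3P[_ _ pB]; apply: shift_sum_inj.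
move=> A; rewrite !inE => /and3P[cardA /eqP sumA pA].
rewrite card_shift_sum cardA partial_block_shift_sum pA andbT /=.
rewrite sum_shift_sum // -modnDml sumA subnKC ?modnDr ?modn_small //.
by rewrite ltnW // ltn_addl.
Qed.

Lemma card_scattered_eq mu r : r < D -> #|scattered_sets mu r| = #|scattered_sets mu 0|.
Proof. by move=> r_lt_D; apply/eqP; rewrite eqn_leq !card_scattered_le. Qed.

Lemma Pmod_closed_form m r : r < D ->
  D * Pmod (m * D) r + 'C(s, m) =
    'C(R, m * D) + (r == (m * 'C(D, 2)) %% D) * D * 'C(s, m).
Proof.
move=> r_lt_D; set r0 := (m * 'C(D, 2)) %% D; set N := #|scattered_sets (m * D) 0|.
have r0_lt_D : r0 < D by rewrite ltn_mod.
have total : D * N + 'C(s, m) = 'C(R, m * D).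
  rewrite -sum_Pmod (eq_bigr (fun r : 'I_D => N + (r == r0 :> nat) * 'C(s, m))) => [|r' _].
    rewrite big_split /= sum_nat_const card_ord mulnC; congr (_ + _).
    rewrite (bigD1 (Ordinal r0_lt_D)) //= eqxx mul1n big1 ?addn0 // => r' /negbTE.
    by rewrite -val_eqE /= => ->.
  by rewrite Pmod_split card_scattered_eq.
by rewrite Pmod_split card_scattered_eq // -total -/N -/r0; ring.
Qed.

End PrimeBlockSize.

End Blocks.

Lemma gcdn_prime_eq R mu p :
  prime (gcdn R mu) -> prime p -> p %| R -> p %| mu -> gcdn R mu = p.
Proof.
by move=> prime_gcd p_prime pR pmu; apply/esym/eqP; rewrite -dvdn_prime2 // dvdn_gcd pR.
Qed.

Lemma Pmod_two_orbits R mu (lam : 'I_R) : 0 < gcdn R mu -> two_orbits R mu ->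
  Pmod R (gcdn R mu) mu (lam %% gcdn R mu) = R %/ gcdn R mu * Pplus R mu lam.
Proof.
set D := gcdn R mu => D_gt0 orbits.
have D_dvd_R : D %| R by apply: dvdn_gcdl.
rewrite (Pmod_Pplus _ _ D_dvd_R) ?(leq_ltn_trans _ (ltn_ord lam)) //.
rewrite (eq_bigr (fun _ => Pplus R mu lam)) => [|l /eqP l_lam].
  by rewrite sum_nat_cond_const card_residue ?ltn_mod // mulnC.
by apply: Pplus_two_orbits; rewrite // /dvdn l_lam.
Qed.

Lemma Pplus_closed_form R mu lam :
  0 < mu -> mu < R -> prime (gcdn R mu) -> two_orbits R mu ->
  let D := gcdn R mu in
  mu * Pplus R mu lam + 'C((R %/ D).-1, (mu %/ D).-1) =
    'C(R.-1, mu.-1) +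
    (lam %% D == (mu %/ D * 'C(D, 2)) %% D) * D * 'C((R %/ D).-1, (mu %/ D).-1).
Proof.
move=> mu_gt0 mu_lt_R D_prime orbits D.
have D_gt0 : 0 < D by apply: prime_gt0.
have R_gt0 : 0 < R by apply: leq_ltn_trans mu_lt_R.
have [D_dvd_R D_dvd_mu] : D %| R /\ D %| mu by rewrite dvdn_gcdl dvdn_gcdr.
have eR : R = R %/ D * D by rewrite divnK.
have emu : mu = mu %/ D * D by rewrite divnK.
set s := R %/ D in eR *; set m := mu %/ D in emu *.
have s_gt0 : 0 < s by rewrite divn_gt0 // dvdn_leq.
have m_gt0 : 0 < m by rewrite divn_gt0 // dvdn_leq.
pose lamR : 'I_R := Ordinal (ltn_pmod lam R_gt0).
have := @Pmod_closed_form R D D_gt0 D_dvd_R D_prime m _ (ltn_pmod lamR D_gt0).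
rewrite -emu Pmod_two_orbits // -/s /= modn_dvdm // Pplus_mod.
set P := Pplus R mu lam; set b := (_ == _ %[mod D]) => key.
have binR := mul_bin_diag R mu.-1; rewrite prednK // in binR.
have bins := mul_bin_diag s m.-1; rewrite prednK // in bins.
have mC : m * 'C(R, mu) = s * 'C(R.-1, mu.-1).
  by apply/eqP; rewrite -(eqn_pmul2r D_gt0) mulnAC -emu -binR {1}eR mulnAC.
apply/eqP; rewrite -(eqn_pmul2l s_gt0); apply/eqP.
transitivity (m * (D * (s * P) + 'C(s, m))); first by rewrite {1}emu mulnDr bins; ring.
rewrite key mulnDr mC mulnDr; congr (_ + _).
by rewrite mulnCA -bins mulnCA.
Qed.

Local Open Scope ring_scope.

Lemma natr_divn_pred (F : numFieldType) n d : (d %| n)%N -> (0 < n)%N ->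
  ((n %/ d).-1)%:R = n%:R / d%:R - 1 :> F.
Proof.
move=> d_dvd_n n_gt0; have d_gt0 : (0 < d)%N by apply: dvdn_gt0 d_dvd_n.
have q_gt0 : (0 < n %/ d)%N by rewrite divn_gt0 // dvdn_leq.
by rewrite -subn1 natrB // natr_div // unitfE pnatr_eq0 -lt0n.
Qed.

Lemma Pplus_closed_form_rat R mu p lam :
  (0 < mu)%N -> (mu < R)%N -> prime (gcdn R mu) -> two_orbits R mu ->
  prime p -> (p %| R)%N -> (p %| mu)%N ->
  (Pplus R mu lam)%:R = mu%:R^-1 * ('C(R.-1, mu.-1)%:R +
     (((lam %% p == (mu %/ p * 'C(p, 2)) %% p) * p)%N%:R - 1) *
       'C((R %/ p)%N.-1, (mu %/ p)%N.-1)%:R) :> rat.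
Proof.
move=> mu_gt0 mu_lt_R D_prime orbits p_prime pR pmu.
have := Pplus_closed_form R mu lam mu_gt0 mu_lt_R D_prime orbits.
rewrite (gcdn_prime_eq _ _ _ D_prime p_prime pR pmu) => /(congr1 (fun n => n%:R : rat)).
rewrite !natrD !natrM => closed_form.
have mu_neq0 : mu%:R != 0 :> rat by rewrite pnatr_eq0 -lt0n.
apply: (mulfI mu_neq0); rewrite mulrA mulfV // mul1r.
by rewrite -[LHS](addrK 'C((R %/ p).-1, (mu %/ p).-1)%:R) closed_form; ring.
Qed.

Theorem theorem4p11 (R mu : nat) (hmu0 : (0 < mu)%N) (hmuR : (mu < R)%N)
  (hDprime : prime (gcdn R mu)) (horb : two_orbits R mu) :
  let D := gcdn R mu in
  let P (n : nat) : rat := (Pplus R mu n)%:R in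
   (* (i) *)
   ((exists t, R = 3 * t)%N -> (6 <= R)%N -> mu = 3%N ->
      P 0%N = 3^-1 * ('C(R.-1, 2)%:R - 1) + 1 /\
      P 1%N = 3^-1 * ('C(R.-1, 2)%:R - 1)) /\
   (* (ii) *)
   ((exists t, R = 4 * t + 2)%N -> (6 <= R)%N -> mu = 4%N ->
      P 0%N = 4^-1 * ('C(R.-1, 3)%:R + (R%:R - 2) / 2) /\
      P 1%N = 4^-1 * ('C(R.-1, 3)%:R - (R%:R - 2) / 2)) /\
   (* (iii) *)
   ((exists t, R = 5 * t)%N -> (10 <= R)%N -> mu = 5%N ->
      P 0%N = 5^-1 * ('C(R.-1, 4)%:R - 1) + 1 /\
      P 1%N = 5^-1 * ('C(R.-1, 4)%:R - 1)) /\
   (* (iv) *)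
   ((R = 2 %[mod 6] /\ (8 <= R)%N \/ R = 4 %[mod 6] /\ (10 <= R)%N) ->
      mu = 6%N ->
      P 0%N = 6^-1 * ('C(R.-1, 5)%:R - 'C((R %/ 2).-1, 2)%:R) /\
      P 1%N = 6^-1 * ('C(R.-1, 5)%:R + 'C((R %/ 2).-1, 2)%:R)) /\
   (* (v) *)
   ((exists t, R = 6 * t + 3)%N -> (9 <= R)%N -> mu = 6%N ->
      P 0%N = 3^-1 * (2^-1 * 'C(R.-1, 5)%:R + (R%:R - 3) / 3) /\
      P 1%N = 6^-1 * ('C(R.-1, 5)%:R - (R%:R - 3) / 3)) /\
   (* (vi) *)
   ((exists t, R = 7 * t)%N -> (14 <= R)%N -> mu = 7%N ->
      P 0%N = 7^-1 * ('C(R.-1, 6)%:R - 1) + 1 /\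
      P 1%N = 7^-1 * ('C(R.-1, 6)%:R - 1)) /\
   (* (vii) *)
   ((exists t, R = 4 * t + 6)%N -> (10 <= R)%N -> mu = 8%N ->
      P 0%N = 8^-1 * ('C(R.-1, 7)%:R + 'C((R %/ 2).-1, 3)%:R) /\
      P 1%N = 8^-1 * ('C(R.-1, 7)%:R - 'C((R %/ 2).-1, 3)%:R)) /\
   (* (viii) *)
   (((exists t, R = 9 * t + 3)%N /\ (12 <= R)%N \/
     (exists t, R = 9 * t + 6)%N /\ (15 <= R)%N) -> mu = 9%N ->
      P 0%N = 9^-1 * ('C(R.-1, 8)%:R + 2 * 'C((R %/ 3).-1, 2)%:R) /\
      P 1%N = 9^-1 * ('C(R.-1, 8)%:R - 'C((R %/ 3).-1, 2)%:R)) /\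
   (* moreover *)
   (forall lam : 'I_R,
      ((D %| lam)%N -> Pplus R mu lam = Pplus R mu 0) /\
      (~~ (D %| lam)%N -> Pplus R mu lam = Pplus R mu 1)).

Proof.
move=> D P; rewrite {}/P.
have R_gt1 : (1 < R)%N by apply: leq_ltn_trans hmuR.
have R_gt0 := ltnW R_gt1.
split.
  move=> [t eR] _ mu3; subst mu; have dvdR : (3 %| R)%N by lia.
  by rewrite !(Pplus_closed_form_rat R 3 3) //= ?mul1n ?mul0n bin0; split; lra.
split.
  move=> [t eR] _ mu4; subst mu; have dvdR : (2 %| R)%N by lia.
  rewrite !(Pplus_closed_form_rat R 4 2) //= ?mul1n ?mul0n bin1 natr_divn_pred //.
  by split; lra.
split.
  move=> [t eR] _ mu5; subst mu; have dvdR : (5 %| R)%N by lia.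
  by rewrite !(Pplus_closed_form_rat R 5 5) //= ?mul1n ?mul0n bin0; split; lra.
split.
  move=> eR mu6; subst mu; have dvdR : (2 %| R)%N by lia.
  by rewrite !(Pplus_closed_form_rat R 6 2) //= ?mul1n ?mul0n; split; lra.
split.
  move=> [t eR] _ mu6; subst mu; have dvdR : (3 %| R)%N by lia.
  rewrite !(Pplus_closed_form_rat R 6 3) //= ?mul1n ?mul0n bin1 natr_divn_pred //.
  by split; lra.
split.
  move=> [t eR] _ mu7; subst mu; have dvdR : (7 %| R)%N by lia.
  by rewrite !(Pplus_closed_form_rat R 7 7) //= ?mul1n ?mul0n bin0; split; lra.
split.
  move=> [t eR] _ mu8; subst mu; have dvdR : (2 %| R)%N by lia.
  by rewrite !(Pplus_closed_form_rat R 8 2) //= ?mul1n ?mul0n; split; lra.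
split.
  move=> eR mu9; subst mu; have dvdR : (3 %| R)%N by case: eR => -[[t ->] _]; lia.
  by rewrite !(Pplus_closed_form_rat R 9 3) //= ?mul1n ?mul0n; split; lra.
by move=> lam; apply: Pplus_dvd_classes.
Qed.
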